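(* Let $M$ be a positive integer, $a=1/M$, and $N\ge 1$ a fixed interaction range. For a $2M$-periodic displacement $u=(u_\ell)_{\ell\in\mathbb{Z}}$ define the linearized continuum energy $$E^{c,lin}(u)=\sum_{\ell=-M+1}^{M}\sum_{\substack{k=-N\\k\neq 0}}^{N}\frac{a}{2}\Big(\frac{k^2}{2}(u'_\ell)^2\phi_{xx}(k)\Big)$$ and the linearized atomistic energy $$E^{a,lin}(u)=\sum_{\ell=-M+1}^{M}\sum_{\substack{k=-N\\k\neq 0}}^{N}\frac{a}{2}\Big(\frac12\Big(\frac{u_{\ell+k}-u_\ell}{a}\Big)^2\phi_{xx}(k)\Big),$$ where the deformed configuration is $y_\ell=x_\ell+u_\ell$ with $x_\ell=a\ell$. Then the consistency error between the linearized continuum energy and the linearized atomistic energy is $O(a^2)$, i.e. $E^{c,lin}(u)-E^{a,lin}(u)=O(a^2)$.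
   Context: $\phi:\mathbb{R}\to\mathbb{R}$ is a Lennard-Jones type pair potential with $\phi(r)=\phi(|r|)$, at least four times differentiable, $\phi_{xx}(1)>0$ and $\phi_{xx}(k)\le 0$ for $k\ge 2$; $\phi_{xx}$ denotes its second derivative. Displacements are $2M$-periodic: $u_{\ell+2M}=u_\ell$. The discrete derivative is $u'_\ell=(u_{\ell+1}-u_\ell)/a$. The $O(a^2)$ is understood as $a\to 0$ with $u$ given as the lattice values $u_\ell=\widetilde u(a\ell)$ of its smooth periodic interpolant $\widetilde u$ (the paper uses the periodic quintic spline interpolant, $C^4$ across nodes), the implied constant depending on $N$, $\phi$ and derivatives of $\widetilde u$. *)

From Stdlib Require Import Reals Lra Lia ZArith List.
From Coquelicot Require Import Coquelicot.
Open Scope R_scope.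

(* zsum lo hi f = sum_{l = lo}^{hi} f l  (empty if hi < lo) *)
Definition zsum (lo hi : Z) (f : Z -> R) : R :=
  fold_right Rplus 0
    (map (fun i => f (lo + Z.of_nat i)%Z) (seq 0 (Z.to_nat (hi - lo + 1)))).

Definition phi_xx (phi : R -> R) : R -> R := Derive_n phi 2.

Definition dprime (a : R) (u : Z -> R) (l : Z) : R := (u (l + 1)%Z - u l) / a.

Definition E_c_lin (phi : R -> R) (N M : nat) (u : Z -> R) : R :=
  let a := / INR M in
  zsum (- Z.of_nat M + 1) (Z.of_nat M) (fun l =>
    zsum (- Z.of_nat N) (Z.of_nat N) (fun k =>
      if Z.eqb k 0 then 0 else
      a / 2 * ((IZR k) ^ 2 / 2 * (dprime a u l) ^ 2 * phi_xx phi (IZR k)))).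

Definition E_a_lin (phi : R -> R) (N M : nat) (u : Z -> R) : R :=
  let a := / INR M in
  zsum (- Z.of_nat M + 1) (Z.of_nat M) (fun l =>
    zsum (- Z.of_nat N) (Z.of_nat N) (fun k =>
      if Z.eqb k 0 then 0 else
      a / 2 * (1 / 2 * ((u (l + k)%Z - u l) / a) ^ 2 * phi_xx phi (IZR k)))).

From Stdlib Require Import Reals ZArith Lra Lia List.
From Coquelicot Require Import Coquelicot.
Open Scope R_scope.

(* With a = 1/M, the two energies differ, for each k, by (M/4) phi''(k) times
   k^2 Σ_l (u_{l+1} - u_l)^2 - Σ_l (u_{l+k} - u_l)^2.  By periodicity
   k Σ_l (u_{l+1} - u_l)^2 = Σ_l Σ_{j<k} (u_{l+j+1} - u_{l+j})^2, so the bracket is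
   a sum over the 2M sites l of the spread k Σ_j e_j^2 - (Σ_j e_j)^2 of the k
   consecutive increments e_j = u_{l+j+1} - u_{l+j}.  Consecutive increments
   differ by a second difference, which is O(a^2) since the interpolant has a
   continuous periodic, hence bounded, second derivative; so each spread is O(k^4 a^4) and
   the total is (M/4) 2M O(a^4) = O(a^2).  The individual increments are only
   O(a), so the periodic cancellation is essential. *)

Definition sum_nat (n : nat) (g : nat -> R) : R := fold_right Rplus 0 (map g (seq 0 n)).

Lemma sum_nat_0 g : sum_nat 0 g = 0.
Proof. reflexivity. Qed.

Lemma sum_nat_S n g : sum_nat (S n) g = sum_nat n g + g n.
Proof.
  unfold sum_nat. rewrite seq_S, map_app, fold_right_app. simpl.
  generalize (map g (seq 0 n)). intro l.
  induction l as [|x l IH]; simpl; [ring | rewrite IH; ring].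
Qed.

Lemma sum_nat_ext n g h :
  (forall i, (i < n)%nat -> g i = h i) -> sum_nat n g = sum_nat n h.
Proof.
  induction n as [|n IH]; intro H; [reflexivity|].
  rewrite !sum_nat_S, IH by (intros; apply H; lia). now rewrite H by lia.
Qed.

Lemma sum_nat_add n g h : sum_nat n (fun i => g i + h i) = sum_nat n g + sum_nat n h.
Proof. induction n; [rewrite !sum_nat_0; ring|]. rewrite !sum_nat_S, IHn; ring. Qed.

Lemma sum_nat_sub n g h : sum_nat n (fun i => g i - h i) = sum_nat n g - sum_nat n h.
Proof. induction n; [rewrite !sum_nat_0; ring|]. rewrite !sum_nat_S, IHn; ring. Qed.

Lemma sum_nat_scal n c g : sum_nat n (fun i => c * g i) = c * sum_nat n g.
Proof. induction n; [rewrite !sum_nat_0; ring|]. rewrite !sum_nat_S, IHn; ring. Qed.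

Lemma sum_nat_const n c : sum_nat n (fun _ => c) = INR n * c.
Proof. induction n; [rewrite sum_nat_0; simpl; ring|]. rewrite !sum_nat_S, IHn, S_INR; ring. Qed.

Lemma sum_nat_le n g h :
  (forall i, (i < n)%nat -> g i <= h i) -> sum_nat n g <= sum_nat n h.
Proof.
  induction n as [|n IH]; intro H; [rewrite !sum_nat_0; lra|]. rewrite !sum_nat_S.
  apply Rplus_le_compat; [apply IH; intros|]; apply H; lia.
Qed.

Lemma sum_nat_abs n g : Rabs (sum_nat n g) <= sum_nat n (fun i => Rabs (g i)).
Proof.
  induction n; [rewrite !sum_nat_0, Rabs_R0; lra|]. rewrite !sum_nat_S.
  eapply Rle_trans; [apply Rabs_triang | lra].
Qed.

Lemma sum_nat_swap n m g :
  sum_nat n (fun i => sum_nat m (fun j => g i j)) = sum_nat m (fun j => sum_nat n (fun i => g i j)).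
Proof.
  induction n as [|n IH].
  - rewrite sum_nat_0, <- (Rmult_0_r (INR m)), <- sum_nat_const. reflexivity.
  - rewrite sum_nat_S, IH, <- sum_nat_add. apply sum_nat_ext. intros. now rewrite sum_nat_S.
Qed.

Lemma sum_nat_shift1 n g : sum_nat n (fun i => g (S i)) = sum_nat n g - g 0%nat + g n.
Proof. induction n; [rewrite !sum_nat_0; ring|]. rewrite !sum_nat_S, IHn. ring. Qed.

Definition sum_from (lo : Z) (n : nat) (f : Z -> R) : R :=
  sum_nat n (fun i => f (lo + Z.of_nat i)%Z).

Lemma zsum_sum_from lo hi f : zsum lo hi f = sum_from lo (Z.to_nat (hi - lo + 1)) f.
Proof. reflexivity. Qed.

Lemma sum_from_periodic_shift_nat P lo f (s : nat) :
  (forall l, f (l + Z.of_nat P)%Z = f l) ->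
  sum_from lo P (fun l => f (l + Z.of_nat s)%Z) = sum_from lo P f.
Proof.
  intros Hf. induction s as [|s IH].
  - apply sum_nat_ext. intros. f_equal. lia.
  - rewrite <- IH. unfold sum_from.
    set (g j := f (lo + Z.of_nat j + Z.of_nat s)%Z).
    transitivity (sum_nat P (fun i => g (S i))).
    { apply sum_nat_ext. intros. unfold g. f_equal. lia. }
    rewrite sum_nat_shift1. unfold g. rewrite <- (Hf (lo + Z.of_nat 0 + Z.of_nat s)%Z).
    replace (lo + Z.of_nat 0 + Z.of_nat s + Z.of_nat P)%Z with (lo + Z.of_nat P + Z.of_nat s)%Z by lia.
    ring.
Qed.

Lemma sum_from_periodic_shift P lo f (s : Z) :
  (forall l, f (l + Z.of_nat P)%Z = f l) ->
  sum_from lo P (fun l => f (l + s)%Z) = sum_from lo P f.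
Proof.
  intros Hf. destruct (Z_le_gt_dec 0 s) as [Hs | Hs].
  - rewrite <- (Z2Nat.id s) by lia. now apply sum_from_periodic_shift_nat.
  - set (g l := f (l + s)%Z).
    rewrite <- (sum_from_periodic_shift_nat P lo g (Z.to_nat (- s))).
    + apply sum_nat_ext. intros. unfold g. f_equal. lia.
    + intro l. unfold g. rewrite <- (Hf (l + s)%Z). f_equal. lia.
Qed.

Lemma zsum_ext lo hi f g : (forall x, f x = g x) -> zsum lo hi f = zsum lo hi g.
Proof. intro H. apply sum_nat_ext. auto. Qed.

Lemma zsum_sub lo hi f g : zsum lo hi (fun x => f x - g x) = zsum lo hi f - zsum lo hi g.
Proof. apply sum_nat_sub. Qed.

Lemma zsum_scal lo hi c f : zsum lo hi (fun x => c * f x) = c * zsum lo hi f.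
Proof. apply sum_nat_scal. Qed.

Lemma zsum_le lo hi f g : (forall x, f x <= g x) -> zsum lo hi f <= zsum lo hi g.
Proof. intro H. apply sum_nat_le. auto. Qed.

Lemma zsum_abs lo hi f : Rabs (zsum lo hi f) <= zsum lo hi (fun x => Rabs (f x)).
Proof. apply sum_nat_abs. Qed.

Lemma zsum_swap lo hi lo' hi' (g : Z -> Z -> R) :
  zsum lo hi (fun l => zsum lo' hi' (fun k => g l k)) =
  zsum lo' hi' (fun k => zsum lo hi (fun l => g l k)).
Proof. apply (sum_nat_swap _ _ (fun i j => g (lo + Z.of_nat i)%Z (lo' + Z.of_nat j)%Z)). Qed.

Definition spread (n : nat) (x : nat -> R) : R :=
  INR n * sum_nat n (fun j => x j ^ 2) - sum_nat n x ^ 2.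

Lemma spread_sub_const n x c : spread n (fun j => x j - c) = spread n x.
Proof.
  unfold spread.
  rewrite (sum_nat_ext n _ (fun j => (x j ^ 2 + (-2 * c) * x j) + c ^ 2)) by (intros; ring).
  rewrite !sum_nat_add, sum_nat_sub, sum_nat_scal, !sum_nat_const. ring.
Qed.

Lemma spread_le n x b :
  (forall j, (j < n)%nat -> Rabs (x j) <= b) -> Rabs (spread n x) <= (INR n * b) ^ 2.
Proof.
  intros Hx.
  assert (Hn : 0 <= INR n) by apply pos_INR.
  assert (Hsq_lo : 0 <= sum_nat n (fun j => x j ^ 2)).
  { rewrite <- (Rmult_0_r (INR n)), <- sum_nat_const. apply sum_nat_le. intros; nra. }
  assert (Hsq_hi : sum_nat n (fun j => x j ^ 2) <= INR n * b ^ 2).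
  { rewrite <- sum_nat_const. apply sum_nat_le. intros j Hj.
    rewrite <- (pow2_abs (x j)). pose proof (Hx j Hj). pose proof (Rabs_pos (x j)). nra. }
  assert (Hsum : Rabs (sum_nat n x) <= INR n * b).
  { eapply Rle_trans; [apply sum_nat_abs|]. rewrite <- sum_nat_const. apply sum_nat_le. auto. }
  assert (Hsum_sq : sum_nat n x ^ 2 <= (INR n * b) ^ 2).
  { rewrite <- (pow2_abs (sum_nat n x)). pose proof (Rabs_pos (sum_nat n x)). nra. }
  unfold spread. apply Rabs_le. split; nra.
Qed.

Definition fdiff (u : Z -> R) (l : Z) : R := u (l + 1)%Z - u l.

Lemma fdiff_telescope u l K :
  u (l + Z.of_nat K)%Z - u l = sum_nat K (fun j => fdiff u (l + Z.of_nat j)%Z).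
Proof.
  induction K as [|K IH].
  - rewrite Z.add_0_r, sum_nat_0. ring.
  - rewrite sum_nat_S, <- IH. unfold fdiff.
    replace (l + Z.of_nat (S K))%Z with (l + Z.of_nat K + 1)%Z by lia. ring.
Qed.

Section PeriodicSequence.

Variables (u : Z -> R) (P : nat) (eps : R).
Hypothesis u_periodic : forall l, u (l + Z.of_nat P)%Z = u l.
Hypothesis u_second_diff : forall m, Rabs (u (m + 2)%Z - 2 * u (m + 1)%Z + u m) <= eps.

Lemma fdiff_drift l j : Rabs (fdiff u (l + Z.of_nat j)%Z - fdiff u l) <= INR j * eps.
Proof.
  induction j as [|j IH].
  - rewrite Z.add_0_r, Rminus_diag, Rabs_R0. simpl. lra.
  - replace (fdiff u (l + Z.of_nat (S j))%Z - fdiff u l) with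
      ((u (l + Z.of_nat j + 2)%Z - 2 * u (l + Z.of_nat j + 1)%Z + u (l + Z.of_nat j)%Z)
       + (fdiff u (l + Z.of_nat j)%Z - fdiff u l)).
    + rewrite S_INR. eapply Rle_trans; [apply Rabs_triang|].
      specialize (u_second_diff (l + Z.of_nat j)%Z). lra.
    + unfold fdiff. replace (l + Z.of_nat (S j) + 1)%Z with (l + Z.of_nat j + 2)%Z by lia.
      replace (l + Z.of_nat (S j))%Z with (l + Z.of_nat j + 1)%Z by lia. ring.
Qed.

Lemma sum_from_fdiff_sq_repeat lo K :
  INR K * sum_from lo P (fun l => fdiff u l ^ 2) =
  sum_from lo P (fun l => sum_nat K (fun j => fdiff u (l + Z.of_nat j)%Z ^ 2)).
Proof.
  unfold sum_from at 2. rewrite sum_nat_swap, <- sum_nat_const. apply sum_nat_ext. intros j _.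
  symmetry. apply (sum_from_periodic_shift P lo (fun l => fdiff u l ^ 2)).
  intro l. unfold fdiff. replace (l + Z.of_nat P + 1)%Z with (l + 1 + Z.of_nat P)%Z by lia.
  now rewrite !u_periodic.
Qed.

Lemma sq_diff_consistency_nat lo K :
  Rabs (INR K ^ 2 * sum_from lo P (fun l => fdiff u l ^ 2)
        - sum_from lo P (fun l => (u (l + Z.of_nat K)%Z - u l) ^ 2))
  <= INR P * (INR K ^ 2 * eps) ^ 2.
Proof.
  replace (INR K ^ 2 * sum_from lo P (fun l => fdiff u l ^ 2))
    with (INR K * (INR K * sum_from lo P (fun l => fdiff u l ^ 2))) by ring.
  rewrite sum_from_fdiff_sq_repeat. unfold sum_from.
  rewrite <- sum_nat_scal, <- sum_nat_sub.
  eapply Rle_trans; [apply sum_nat_abs|]. rewrite <- sum_nat_const. apply sum_nat_le. intros i _.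
  set (l := (lo + Z.of_nat i)%Z).
  rewrite fdiff_telescope.
  change (Rabs (spread K (fun j => fdiff u (l + Z.of_nat j)%Z)) <= (INR K ^ 2 * eps) ^ 2).
  rewrite <- (spread_sub_const K _ (fdiff u l)).
  replace (INR K ^ 2 * eps) with (INR K * (INR K * eps)) by ring.
  apply spread_le. intros j Hj.
  eapply Rle_trans; [apply fdiff_drift|].
  apply Rmult_le_compat_r; [| apply le_INR; lia].
  specialize (u_second_diff 0%Z). pose proof (Rabs_pos (u (0 + 2)%Z - 2 * u (0 + 1)%Z + u 0%Z)). lra.
Qed.


Lemma sum_from_sq_diff_abs lo k :
  sum_from lo P (fun l => (u (l + k)%Z - u l) ^ 2) =
  sum_from lo P (fun l => (u (l + Z.abs k)%Z - u l) ^ 2).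
Proof.
  destruct (Z_le_gt_dec 0 k) as [Hk | Hk]; [now rewrite Z.abs_eq|].
  rewrite <- (sum_from_periodic_shift P lo (fun l => (u (l + k)%Z - u l) ^ 2) (- k)).
  - apply sum_nat_ext. intros i _. rewrite Z.abs_neq by lia.
    replace (lo + Z.of_nat i + - k + k)%Z with (lo + Z.of_nat i)%Z by lia. ring.
  - intro l. replace (l + Z.of_nat P + k)%Z with (l + k + Z.of_nat P)%Z by lia.
    now rewrite !u_periodic.
Qed.

Lemma sq_diff_consistency lo k :
  Rabs (IZR k ^ 2 * sum_from lo P (fun l => fdiff u l ^ 2)
        - sum_from lo P (fun l => (u (l + k)%Z - u l) ^ 2))
  <= INR P * (IZR k ^ 2 * eps) ^ 2.
Proof.
  assert (Hk : IZR k ^ 2 = INR (Z.abs_nat k) ^ 2).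
  { rewrite INR_IZR_INZ, Nat2Z.inj_abs_nat, abs_IZR. symmetry. apply pow2_abs. }
  rewrite sum_from_sq_diff_abs, Hk, <- Nat2Z.inj_abs_nat.
  apply sq_diff_consistency_nat.
Qed.

End PeriodicSequence.

Section PeriodicFunction.

Variables (f : R -> R) (p : R).
Hypothesis f_periodic : forall x, f (x + p) = f x.

Lemma Derive_periodic x : Derive f (x + p) = Derive f x.
Proof.
  unfold Derive. f_equal. apply Lim_ext. intro h.
  replace (x + p + h) with (x + h + p) by ring. now rewrite !f_periodic.
Qed.

Lemma periodic_IZR q x : f (x + IZR q * p) = f x.
Proof.
  assert (Hnat : forall n y, f (y + INR n * p) = f y).
  { induction n as [|n IH]; intro y; [f_equal; simpl; ring|].
    rewrite S_INR, <- (IH y), <- (f_periodic (y + INR n * p)). f_equal. ring. }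
  destruct (Z_le_gt_dec 0 q) as [Hq | Hq].
  - now rewrite <- (Z2Nat.id q), <- INR_IZR_INZ by lia.
  - rewrite <- (Hnat (Z.to_nat (- q))), INR_IZR_INZ, Z2Nat.id, opp_IZR by lia.
    f_equal. ring.
Qed.

Lemma periodic_continuous_bounded :
  0 < p -> (forall x, continuous f x) -> exists B, forall x, Rabs (f x) <= B.
Proof.
  intros Hp Hf.
  destruct (continuity_ab_maj (fun y => Rabs (f y)) 0 p) as [m [Hm _]]; [lra| |].
  { intros c _. apply continuity_pt_filterlim, continuous_Rabs_comp, Hf. }
  exists (Rabs (f m)). intro x.
  pose proof (Zfloor_bound (x / p)) as Hfl.
  rewrite <- (periodic_IZR (- Zfloor (x / p)) x), opp_IZR.
  apply Hm. split.
  - apply (Rmult_le_reg_r (/ p)); [now apply Rinv_0_lt_compat|].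
    replace ((x + - IZR (Zfloor (x / p)) * p) * / p) with (x / p - IZR (Zfloor (x / p))) by (field; lra).
    lra.
  - apply (Rmult_le_reg_r (/ p)); [now apply Rinv_0_lt_compat|].
    replace ((x + - IZR (Zfloor (x / p)) * p) * / p) with (x / p - IZR (Zfloor (x / p))) by (field; lra).
    rewrite Rinv_r by lra. lra.
Qed.

End PeriodicFunction.

Lemma abs_increment_le (f df : R -> R) B x h :
  0 <= h ->
  (forall t, x <= t <= x + h -> is_derive f t (df t)) ->
  (forall t, x <= t <= x + h -> Rabs (df t) <= B) ->
  Rabs (f (x + h) - f x) <= B * h.
Proof.
  intros Hh Hder Hdf.
  destruct (MVT_gen f x (x + h) df) as [c [Hc ->]];
    rewrite ?Rmin_left, ?Rmax_right in * by lra.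
  - intros t Ht. apply Hder. lra.
  - intros t Ht. apply continuity_pt_filterlim, (ex_derive_continuous f).
    eexists. apply Hder. lra.
  - replace (x + h - x) with h by ring. rewrite Rabs_mult, (Rabs_right h) by lra.
    apply Rmult_le_compat_r; auto.
Qed.

Lemma second_difference_le (f : R -> R) B x h :
  0 <= h ->
  (forall t, ex_derive f t) -> (forall t, ex_derive (Derive f) t) ->
  (forall t, Rabs (Derive (Derive f) t) <= B) ->
  Rabs (f (x + 2 * h) - 2 * f (x + h) + f x) <= B * h ^ 2.
Proof.
  intros Hh Hf Hf' HB.
  set (g t := f (t + h) - f t).
  replace (f (x + 2 * h) - 2 * f (x + h) + f x) with (g (x + h) - g x)
    by (unfold g; replace (x + h + h) with (x + 2 * h) by ring; ring).
  replace (B * h ^ 2) with ((B * h) * h) by ring.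
  apply abs_increment_le with (df := fun t => Derive f (t + h) - Derive f t); auto.
  - intros t _. unfold g. auto_derive; [auto | change (fun y => f y) with f; ring].
  - intros t _. apply abs_increment_le with (df := Derive (Derive f)); auto.
    intros s _. now apply Derive_correct.
Qed.

Lemma periodic_second_difference_bound (f : R -> R) p :
  0 < p -> (forall x, f (x + p) = f x) ->
  (forall t, ex_derive f t) -> (forall t, ex_derive (Derive f) t) ->
  (forall t, continuous (Derive (Derive f)) t) ->
  exists B, forall x h, 0 <= h -> Rabs (f (x + 2 * h) - 2 * f (x + h) + f x) <= B * h ^ 2.
Proof.
  intros Hp Hper Hf Hf' Hf''.
  assert (Hper'' : forall x, Derive (Derive f) (x + p) = Derive (Derive f) x).
  { apply Derive_periodic, Derive_periodic, Hper. }
  destruct (periodic_continuous_bounded _ p Hper'' Hp Hf'') as [B HB].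
  exists B. intros x h Hh. now apply second_difference_le.
Qed.

Lemma E_c_lin_sub_E_a_lin phi N M u :
  (1 <= M)%nat ->
  E_c_lin phi N M u - E_a_lin phi N M u =
  zsum (- Z.of_nat N) (Z.of_nat N) (fun k =>
    INR M / 4 * phi_xx phi (IZR k) *
    (IZR k ^ 2 * zsum (- Z.of_nat M + 1) (Z.of_nat M) (fun l => fdiff u l ^ 2)
     - zsum (- Z.of_nat M + 1) (Z.of_nat M) (fun l => (u (l + k)%Z - u l) ^ 2))).
Proof.
  intro HM. assert (HM' : INR M <> 0) by (apply not_0_INR; lia).
  unfold E_c_lin, E_a_lin. cbv zeta.
  rewrite <- zsum_sub.
  erewrite zsum_ext; [| intro l; rewrite <- zsum_sub; reflexivity].
  rewrite zsum_swap. apply zsum_ext. intro k.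
  rewrite <- zsum_scal, <- zsum_sub, <- zsum_scal.
  apply zsum_ext. intro l. unfold dprime, fdiff.
  destruct (Z.eqb_spec k 0) as [-> | Hk].
  - rewrite Z.add_0_r. ring.
  - field. auto.
Qed.

Lemma zsum_period_window (M : nat) f :
  zsum (- Z.of_nat M + 1) (Z.of_nat M) f = sum_from (- Z.of_nat M + 1) (2 * M) f.
Proof. rewrite zsum_sum_from. f_equal. lia. Qed.

Lemma E_lin_consistency phi N M u eps :
  (1 <= M)%nat ->
  (forall l, u (l + Z.of_nat (2 * M))%Z = u l) ->
  (forall m, Rabs (u (m + 2)%Z - 2 * u (m + 1)%Z + u m) <= eps) ->
  Rabs (E_c_lin phi N M u - E_a_lin phi N M u) <=
  INR M ^ 2 / 2 * zsum (- Z.of_nat N) (Z.of_nat N)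
                    (fun k => Rabs (phi_xx phi (IZR k)) * (IZR k ^ 2 * eps) ^ 2).
Proof.
  intros HM Hper Hsd. assert (HM' : 0 < INR M) by (apply lt_0_INR; lia).
  rewrite E_c_lin_sub_E_a_lin by exact HM.
  eapply Rle_trans; [apply zsum_abs|]. rewrite <- zsum_scal. apply zsum_le. intro k.
  pose proof (sq_diff_consistency u (2 * M) eps Hper Hsd (- Z.of_nat M + 1) k) as Hk.
  rewrite mult_INR in Hk. simpl (INR 2) in Hk.
  rewrite !zsum_period_window, !Rabs_mult, (Rabs_right (INR M / 4)) by lra.
  pose proof (Rabs_pos (phi_xx phi (IZR k))).
  apply Rle_trans with (INR M / 4 * Rabs (phi_xx phi (IZR k)) * (2 * INR M * (IZR k ^ 2 * eps) ^ 2)).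
  - apply Rmult_le_compat_l; [nra | exact Hk].
  - right. field.
Qed.

Theorem proposition1 (phi : R -> R) (N : nat) (ut : R -> R) :
  (forall r, phi r = phi (Rabs r)) ->
  (forall (k : nat) (x : R), (k <= 4)%nat -> x <> 0 -> ex_derive_n phi k x) ->
  phi_xx phi 1 > 0 ->
  (forall k : nat, (2 <= k)%nat -> phi_xx phi (INR k) <= 0) ->
  (1 <= N)%nat ->
  (forall x, ut (x + 2) = ut x) ->
  (forall (k : nat) (x : R), (k <= 4)%nat -> ex_derive_n ut k x) ->
  (forall x, continuous (Derive_n ut 4) x) ->
  exists C : R, forall M : nat, (1 <= M)%nat ->
    Rabs (E_c_lin phi N M (fun l => ut (IZR l / INR M))
          - E_a_lin phi N M (fun l => ut (IZR l / INR M)))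
    <= C * (/ INR M) ^ 2.
Proof.
  intros _ _ _ _ _ Hper Hd _.
  assert (Hut1 : forall t, ex_derive ut t) by (intro t; exact (Hd 1%nat t ltac:(lia))).
  assert (Hut2 : forall t, ex_derive (Derive ut) t) by (intro t; exact (Hd 2%nat t ltac:(lia))).
  assert (Hut3 : forall t, continuous (Derive (Derive ut)) t).
  { intro t. apply (ex_derive_continuous (Derive (Derive ut))). exact (Hd 3%nat t ltac:(lia)). }
  destruct (periodic_second_difference_bound ut 2 ltac:(lra) Hper Hut1 Hut2 Hut3) as [B HB].
  exists (zsum (- Z.of_nat N) (Z.of_nat N)
           (fun k => Rabs (phi_xx phi (IZR k)) * (IZR k ^ 2 * B) ^ 2) / 2).
  intros M HM. assert (HM' : 0 < INR M) by (apply lt_0_INR; lia).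
  eapply Rle_trans.
  - apply (E_lin_consistency _ _ _ _ (B * (/ INR M) ^ 2) HM).
    + intro l. rewrite plus_IZR, <- INR_IZR_INZ, mult_INR, <- (Hper (IZR l / INR M)).
      f_equal. simpl. field. lra.
    + intro m. rewrite !plus_IZR.
      replace ((IZR m + 2) / INR M) with (IZR m / INR M + 2 * / INR M) by (field; lra).
      replace ((IZR m + 1) / INR M) with (IZR m / INR M + / INR M) by (field; lra).
      apply HB. left. now apply Rinv_0_lt_compat.
  - right. rewrite (zsum_ext _ _ _ (fun k => (/ INR M) ^ 4 *
      (Rabs (phi_xx phi (IZR k)) * (IZR k ^ 2 * B) ^ 2))) by (intro; ring).
    rewrite zsum_scal. field. lra.
Qed.
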